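(* Let $G$ be a group and $\varphi\colon A\to B$ an isomorphism between subgroups of $G$. Let $Y$ be a group, $y\in Y$, and $\alpha\colon (G,\varphi)\to (Y,c_y)$ an embedding of HNN pairs. (1) If $Y$ is a finite group of $p$-power order ($p$ a prime), then the order of the restriction of $\varphi$ to $H(G,\varphi)$ is a power of $p$. (2) For $a\in A$ and $b\in B$, $\alpha$ is an embedding of HNN pairs $(G,c_b\circ\varphi\circ c_a)\to (Y,c_{\alpha(a)y\alpha(b)})$.
   Context: An HNN pair $(G,\varphi)$ is a group $G$ with an isomorphism $\varphi\colon A\to B$ between subgroups. For $g$ in a group, $c_g(x)=g^{-1}xg$; $(Y,c_y)$ is the HNN pair with $c_y\colon Y\to Y$. For $a\in A$, $b\in B$, $c_b\circ\varphi\circ c_a$ is an isomorphism $A\to B$. A morphism of HNN pairs $(G,\varphi\colon A\to B)\to(G',\varphi'\colon A'\to B')$ is a group homomorphism $\alpha\colon G\to G'$ with $\alpha(A)\subseteq A'$, $\alpha(B)\subseteq B'$ and $\varphi'\circ\alpha|_A=\alpha|_B\circ\varphi$; it is an embedding if $\alpha$ is injective. The core $H(G,\varphi)$ is $\bigcap_k H_k$ where $H_0=A\cap B$ and $H_{k+1}=\varphi^{-1}(H_k)\cap H_k\cap\varphi(H_k)$; $\varphi$ restricts to an automorphism of $H(G,\varphi)$. *)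

From HB Require Import structures.
From mathcomp Require Import all_boot.
Set Implicit Arguments. Unset Strict Implicit. Unset Printing Implicit Defensive.
Local Open Scope group_scope.

Definition is_subgroup (G : groupType) (S : G -> Prop) : Prop :=
  S 1 /\ (forall x y, S x -> S y -> S (x * y)) /\ (forall x, S x -> S x^-1).

Definition cg (G : groupType) (g : G) : G -> G := fun x => g^-1 * x * g.

(* phi (a function on G, only its restriction to A matters) is a group
   isomorphism from A onto B. *)
Definition is_iso_on (G : groupType) (A B : G -> Prop) (phi : G -> G) : Prop :=
  (forall x, A x -> B (phi x)) /\
  (forall x y, A x -> A y -> phi (x * y) = phi x * phi y) /\
  (forall x y, A x -> A y -> phi x = phi y -> x = y) /\
  (forall z, B z -> exists x, A x /\ phi x = z).

Definition HNN_pair (G : groupType) (A B : G -> Prop) (phi : G -> G) : Prop :=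
  is_subgroup A /\ is_subgroup B /\ is_iso_on A B phi.

Definition HNN_morphism (G G' : groupType) (A B : G -> Prop) (phi : G -> G)
    (A' B' : G' -> Prop) (phi' : G' -> G') (alpha : G -> G') : Prop :=
  (forall x y, alpha (x * y) = alpha x * alpha y) /\
  (forall x, A x -> A' (alpha x)) /\
  (forall x, B x -> B' (alpha x)) /\
  (forall x, A x -> phi' (alpha x) = alpha (phi x)).

Definition HNN_embedding (G G' : groupType) (A B : G -> Prop) (phi : G -> G)
    (A' B' : G' -> Prop) (phi' : G' -> G') (alpha : G -> G') : Prop :=
  HNN_morphism A B phi A' B' phi' alpha /\ injective alpha.

(* H_0 = A ∩ B, H_{k+1} = phi^{-1}(H_k) ∩ H_k ∩ phi(H_k) *)
Fixpoint Hk (G : groupType) (A B : G -> Prop) (phi : G -> G) (k : nat) : G -> Prop :=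
  match k with
  | 0 => fun x => A x /\ B x
  | k'.+1 => fun x =>
      (A x /\ Hk A B phi k' (phi x)) /\ Hk A B phi k' x /\
      (exists z, Hk A B phi k' z /\ phi z = x)
  end.

Definition HNN_core (G : groupType) (A B : G -> Prop) (phi : G -> G) : G -> Prop :=
  fun x => forall k, Hk A B phi k x.

Definition order_on (G : groupType) (P : G -> Prop) (f : G -> G) (n : nat) : Prop :=
  (0 < n)%N /\ (forall x, P x -> iter n f x = x) /\
  (forall m, (0 < m < n)%N -> exists x, P x /\ iter m f x <> x).

Definition finite_ppower_order (Y : groupType) (p : nat) : Prop :=
  exists s : seq Y, uniq s /\ (forall x, x \in s) /\ exists k, size s = (p ^ k)%N.

(* Since alpha is an injective morphism intertwining phi with c_y, on the
   phi-stable core it turns phi^n into c_(y^n); in a group of order p^m we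
   have y^(p^m) = 1, so phi^(p^m) is the identity on the core and the order
   of phi there divides p^m.  For (2), c_(alpha(a) y alpha(b)) is the
   composite c_(alpha b) o c_y o c_(alpha a), and alpha carries each factor
   to the corresponding conjugation in G. *)
From HB Require Import structures.
From mathcomp Require Import all_boot all_fingroup cyclic.
From mathcomp Require Import boolp.
Local Open Scope group_scope.

Section EnumeratedGroup.

Variables (Y : groupType) (s : seq Y).
Hypotheses (s_uniq : uniq s) (mem_s : forall x, x \in s).

(* A copy of Y on which the enumeration s induces a finGroupType structure. *)
Definition enum_group : Type := Y.
HB.instance Definition _ := Group.on enum_group.

Lemma enum_group_pickK :
  pcancel (fun x : enum_group => index x s)
          (fun n => if (n < size s)%N then Some (nth 1 s n) else None).
Proof. by move=> x; rewrite index_mem mem_s nth_index. Qed.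
HB.instance Definition _ := PCanIsCountable enum_group_pickK.

Lemma enum_group_finite : Finite.axiom (s : seq enum_group).
Proof. by move=> x; rewrite count_uniq_mem // mem_s. Qed.
HB.instance Definition _ := isFinite.Build enum_group enum_group_finite.

Lemma expg_size_enum (y : Y) : y ^+ size s = 1.
Proof.
have -> : size s = #|[set: enum_group]|.
  have s_uniq' : @uniq enum_group s := s_uniq.
  by rewrite cardsT -(card_uniqP s_uniq'); apply: eq_card => x; rewrite mem_s.
exact: (@expg_cardG _ [set: enum_group] (y : enum_group) (in_setT _)).
Qed.

End EnumeratedGroup.

Section Conjugation.

Variable Y : groupType.

Lemma cg1 (x : Y) : cg 1 x = x.
Proof. by rewrite /cg invg1 mul1g mulg1. Qed.

Lemma cgM (u v x : Y) : cg (u * v) x = cg v (cg u x).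
Proof. by rewrite /cg invMg !mulgA. Qed.

Lemma iter_cg (y x : Y) n : iter n (cg y) x = cg (y ^+ n) x.
Proof. by elim: n => [|n IHn]; rewrite ?cg1 // iterS IHn expgSr cgM. Qed.

End Conjugation.

Section Morphism.

Context {G Y : groupType} {alpha : G -> Y}.
Hypothesis alphaM : forall x y, alpha (x * y) = alpha x * alpha y.

Lemma morph1 : alpha 1 = 1.
Proof. by apply: (@mulgI _ (alpha 1)); rewrite -alphaM !mulg1. Qed.

Lemma morphV x : alpha x^-1 = (alpha x)^-1.
Proof. by apply: (@mulgI _ (alpha x)); rewrite -alphaM !mulgV morph1. Qed.

Lemma morph_cg a x : alpha (cg a x) = cg (alpha a) (alpha x).
Proof. by rewrite /cg !alphaM morphV. Qed.

End Morphism.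

Lemma iterM_period {T : Type} {P : T -> Prop} {f : T -> T} {n} q :
  (forall x, P x -> iter n f x = x) -> forall x, P x -> iter (q * n) f x = x.
Proof. by move=> fn x Px; elim: q => [|q IHq] //; rewrite mulSn iterD IHq fn. Qed.

Lemma order_on_dvd {G : groupType} {P : G -> Prop} {f : G -> G} {n} :
  (0 < n)%N -> (forall x, P x -> iter n f x = x) ->
  exists2 d, (d %| n)%N & order_on P f d.
Proof.
move=> n_gt0 fn.
pose period m := (0 < m)%N && `[< forall x, P x -> iter m f x = x >].
have period_n : exists m, period m by exists n; rewrite /period n_gt0; apply/asboolP.
case: (ex_minnP period_n) => d /andP[d_gt0 /asboolP fd] d_min.
(* n %% d is a period smaller than d, hence not a positive one *)
have d_dvd_n : (d %| n)%N.
  apply: contraT; rewrite /dvdn -lt0n => r_gt0.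
  have: (d <= n %% d)%N.
    apply: d_min; rewrite /period r_gt0; apply/asboolP => x Px.
    by rewrite -{2}(fn x Px) {2}(divn_eq n d) addnC iterD (iterM_period _ fd).
  by rewrite leqNgt ltn_pmod.
exists d => //; split=> //; split=> // m /andP[m_gt0 lt_md].
apply: contrapT => no_witness; move: lt_md; rewrite ltnNge d_min //.
rewrite /period m_gt0; apply/asboolP => x Px.
by apply: contrapT => fmx; apply: no_witness; exists x.
Qed.

Section Core.

Context {G : groupType} {A B : G -> Prop} {phi : G -> G}.

Lemma HNN_core_subA x : HNN_core A B phi x -> A x.
Proof. by move/(_ 0%N) => []. Qed.

Lemma HNN_core_phi x : HNN_core A B phi x -> HNN_core A B phi (phi x).
Proof. by move=> Hx k; case: (Hx k.+1) => [[_]]. Qed.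

Lemma HNN_core_iter n x : HNN_core A B phi x -> HNN_core A B phi (iter n phi x).
Proof. by move=> Hx; elim: n => //= n; apply: HNN_core_phi. Qed.

Context {Y : groupType} {y : Y} {alpha : G -> Y}.
Hypothesis alpha_morph :
  HNN_morphism A B phi (fun _ => True) (fun _ => True) (cg y) alpha.

Lemma morph_iter_core n x :
  HNN_core A B phi x -> alpha (iter n phi x) = cg (y ^+ n) (alpha x).
Proof.
case: alpha_morph => _ [_ [_ alpha_phi]] Hx.
rewrite -iter_cg; elim: n => //= n <-.
by rewrite alpha_phi //; apply/HNN_core_subA/HNN_core_iter.
Qed.

Lemma HNN_core_iter_expg_id n :
  injective alpha -> y ^+ n = 1 ->
  forall x, HNN_core A B phi x -> iter n phi x = x.
Proof. by move=> alpha_inj yn x Hx; apply: alpha_inj; rewrite morph_iter_core // yn cg1. Qed.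

End Core.

Lemma HNN_embedding_conj (G Y : groupType) (A B : G -> Prop) (phi : G -> G)
    (y : Y) (alpha : G -> Y) (a b : G) :
  is_subgroup A -> A a ->
  HNN_embedding A B phi (fun _ => True) (fun _ => True) (cg y) alpha ->
  HNN_embedding A B (fun x => cg b (phi (cg a x)))
    (fun _ => True) (fun _ => True) (cg (alpha a * y * alpha b)) alpha.
Proof.
move=> [_ [AM AV]] Aa [[alphaM [_ [_ alpha_phi]]] alpha_inj].
split=> //; split=> //; split=> //; split=> // x Ax.
have Aax : A (cg a x) by rewrite /cg; apply: (AM) => //; apply: (AM) => //; apply: AV.
by rewrite !cgM -(morph_cg alphaM) alpha_phi // (morph_cg alphaM).
Qed.

Theorem lemma3p1 (G Y : groupType) (A B : G -> Prop) (phi : G -> G)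
    (y : Y) (alpha : G -> Y) :
  HNN_pair A B phi ->
  HNN_embedding A B phi (fun _ => True) (fun _ => True) (cg y) alpha ->
  (forall p : nat, prime p -> finite_ppower_order Y p ->
     exists k : nat, order_on (HNN_core A B phi) phi (p ^ k)%N) /\
  (forall a b : G, A a -> B b ->
     HNN_embedding A B (fun x => cg b (phi (cg a x)))
       (fun _ => True) (fun _ => True) (cg (alpha a * y * alpha b)) alpha).
Proof.
move=> [A_subgroup _] emb; split=> [p p_prime [s [s_uniq [mem_s [m size_s]]]]|a b Aa _].
- have phi_period : forall x, HNN_core A B phi x -> iter (p ^ m) phi x = x.
    have y_period : y ^+ (p ^ m) = 1 by rewrite -size_s expg_size_enum.
    case: emb => alpha_morph alpha_inj.
    exact: HNN_core_iter_expg_id alpha_morph _ alpha_inj y_period.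
  have pm_gt0 : (0 < p ^ m)%N by rewrite expn_gt0 prime_gt0.
  have [d d_dvd ord_d] := order_on_dvd pm_gt0 phi_period.
  have /(dvdn_pfactor _ _ p_prime)[k _ d_eq] := d_dvd.
  by exists k; rewrite -d_eq.
- exact: HNN_embedding_conj emb.
Qed.
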